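(* Let $q\in(0.5,1)$. Consider the discrete-time system $$x_{k+1}=f(x_k)+G(x_k)u_k+w_k,$$ with state $x_k\in\mathbb{R}^n$, input $u_k\in\mathbb{R}^m$, disturbance $w_k\in\mathbb{R}^n$, and unknown functions $f:\mathbb{R}^n\to\mathbb{R}^n$, $G:\mathbb{R}^n\to\mathbb{R}^{n\times m}$. Let $H=[h_1,\dots,h_{n_c}]^\top\in\mathbb{R}^{n_c\times n}$ and $d=[d_1,\dots,d_{n_c}]^\top\in\mathbb{R}^{n_c}$. Assume: (A1) matrices $A\in\mathbb{R}^{n\times n}$, $B\in\mathbb{R}^{m\times m}$-compatible $B\in\mathbb{R}^{n\times m}$ are known, with approximation error $e(x,u):=f(x)+G(x)u-(Ax+Bu)$; (A2) the disturbance $w_k$ follows $\mathcal{N}(\mu_w,\Sigma_w)$ with known $\mu_w\in\mathbb{R}^n$, $\Sigma_w\in\mathbb{R}^{n\times n}$, and $w_k$ is uncorrelated with the exploration term $\varepsilon_k$ below; (A3) for a positive integer $\tau$, numbers $\bar\delta_j<\infty$, $\bar\Delta_j<\infty$ ($j=1,\dots,n_c$) are known with $\bar\delta_j\ge\sup_{x\in\mathbb{R}^n,u\in\mathbb{R}^m}|h_j^\top e(x,u)|$ and $\bar\Delta_j\ge\sup_{x\in\mathbb{R}^n,u\in\mathbb{R}^m}|h_j^\top(A^{\tau-1}+A^{\tau-2}+\cdots+I)e(x,u)|$. Suppose that, when the state at time $k$ is $x_k$, the input is generated as $u_k=\mu(x_k;\theta_k)+\varepsilon_k$ with $\varepsilon_k\sim\mathcal{N}(0,\Sigma_k)$,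 $\Sigma_k\in\mathbb{R}^{m\times m}$. Let $B'=[B,\ I]\in\mathbb{R}^{n\times(m+n)}$. If $$\left\|h_j^\top B'\begin{bmatrix}\Sigma_k&0\\0&\Sigma_w\end{bmatrix}^{1/2}\right\|_2\le\frac{1}{\Phi^{-1}(q)}\Big\{d_j-h_j^\top\big(Ax_k+B\mu(x_k;\theta_k)+\mu_w\big)+\delta_j\Big\}$$ for all $j=1,\dots,n_c$ and all $\delta_j\in\{\bar\delta_j,-\bar\delta_j\}$, then $\Pr\{h_j^\top x_{k+1}\le d_j\}\ge q$ for all $j=1,\dots,n_c$.
   Context: $\Phi$ denotes the cumulative distribution function of the standard normal distribution. $\mu(\cdot;\theta):\mathbb{R}^n\to\mathbb{R}^m$ is a deterministic feedback law (base policy) with parameter $\theta_k$ at time $k$. For a positive semidefinite matrix $M$, $M^{1/2}$ denotes its matrix square root. Probabilities are over the randomness of $\varepsilon_k$ and $w_k$ given the current state $x_k$. $\|\cdot\|_2$ is the Euclidean norm of a row vector. *)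

From HB Require Import structures.
From mathcomp Require Import all_boot all_order all_algebra.
From mathcomp Require Import all_classical all_reals all_analysis.
Set Implicit Arguments. Unset Strict Implicit. Unset Printing Implicit Defensive.
Import Order.TTheory GRing.Theory Num.Theory.
Local Open Scope classical_set_scope.
Local Open Scope ring_scope.

Definition psd {R : realType} {N : nat} (M : 'M[R]_N) : Prop :=
  M^T = M /\ forall v : 'cV[R]_N, 0 <= (v^T *m M *m v) 0 0.

Definition is_sqrtm {R : realType} {N : nat} (M S : 'M[R]_N) : Prop :=
  psd S /\ S *m S = M.

Definition norm2 {R : realType} {p : nat} (v : 'rV[R]_p) : R :=
  Num.sqrt (\sum_(i < p) v 0 i ^+ 2).

Definition gauss_law {R : realType} (m v : R) (A : set R) : \bar R :=
  if v == 0 then (\1_A m)%:E else normal_prob m (Num.sqrt v) A.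

(* Z is a Gaussian random vector N(mu, S) on the probability space P:
   every linear functional a^T Z is a measurable real random variable
   distributed as N(a^T mu, a^T S a). *)
Definition gaussian_vec {R : realType} {d : measure_display} {T : measurableType d}
  (P : probability T R) {N : nat} (Z : T -> 'cV[R]_N) (mu : 'cV[R]_N) (S : 'M[R]_N)
  : Prop :=
  forall a : 'cV[R]_N,
    measurable_fun setT (fun t => (a^T *m Z t) 0 0) /\
    forall A : set R, measurable A ->
      P ((fun t => (a^T *m Z t) 0 0) @^-1` A) =
      gauss_law ((a^T *m mu) 0 0) ((a^T *m S *m a) 0 0) A.

Definition Phi {R : realType} (t : R) : R :=
  fine (normal_prob 0 1 `]-oo, t]).

Definition Phi_inv {R : realType} (q : R) : R :=
  inf [set t : R | q <= Phi t].

Definition err {R : realType} {n m : nat}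
  (f : 'cV[R]_n -> 'cV[R]_n) (G : 'cV[R]_n -> 'M[R]_(n, m))
  (A : 'M[R]_n) (B : 'M[R]_(n, m)) (x : 'cV[R]_n) (u : 'cV[R]_m) : 'cV[R]_n :=
  f x + G x *m u - (A *m x + B *m u).

From HB Require Import structures.
From mathcomp Require Import all_boot all_order all_algebra.
From mathcomp Require Import all_classical all_reals all_analysis.
From mathcomp Require Import measurable_realfun.
From mathcomp.algebra_tactics Require Import ring lra.
Import Order.TTheory GRing.Theory Num.Theory numFieldNormedType.Exports.
Local Open Scope classical_set_scope.
Local Open Scope ring_scope.

(* The constraint value h_j^T x_{k+1} splits as h_j^T (A x_k + B mu(x_k))
   + h_j^T e(x_k, u_k) + h_j^T B' [eps_k; w_k].  The model error term is at
   most dbar_j, and the last term is Gaussian with mean h_j^T mu_w and standard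
   deviation ||h_j^T B' Sigma^{1/2}||.  The hypothesis with delta = -dbar_j puts
   d_j - h_j^T (A x_k + B mu(x_k)) - dbar_j at least Phi^{-1}(q) standard
   deviations above that mean, so the Gaussian term stays below it with
   probability at least Phi(Phi^{-1}(q)) >= q, and on that event the constraint
   holds.  Since q > 1/2 = Phi(0), Phi^{-1}(q) > 0, which lets us multiply the
   hypothesis through by it. *)

Section standard_normal_cdf.
Context {R : realType}.
Local Notation N := (@normal_prob R 0 1).

Lemma normal_prob_lty (A : set R) : measurable A -> (N A < +oo)%E.
Proof.
move=> mA; have N_le1 : (N A <= 1)%E by apply: probability_le1.
by rewrite (le_lt_trans N_le1) ?ltry.
Qed.

Lemma Phi_EFin (t : R) : (Phi t)%:E = N `]-oo, t].
Proof. by rewrite /Phi fineK // ge0_fin_numE ?measure_ge0 ?normal_prob_lty. Qed.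

Lemma Phi_le1 (t : R) : Phi t <= 1.
Proof. by rewrite -lee_fin Phi_EFin probability_le1. Qed.

Lemma Phi_nondecreasing : {homo @Phi R : s t / s <= t}.
Proof.
move=> s t st; rewrite -lee_fin !Phi_EFin; apply: le_measure; rewrite ?inE //.
by move=> x /=; rewrite !in_itv /= => /le_trans; apply.
Qed.

Lemma Phi_cvg_right (t : R) : Phi (t + k.+1%:R^-1) @[k --> \oo] --> Phi t.
Proof.
pose F k : set R := [set` `]-oo, t + k.+1%:R^-1]].
have mF k : measurable (F k) by exact: measurable_itv.
have capF : \bigcap_k F k = `]-oo, t]%classic.
  apply/seteqP; split => x /=; rewrite in_itv /=.
    move=> Fx; rewrite leNgt; apply/negP => /ltr_add_invr[k tkx].
    by move: (Fx k I); rewrite /F /= in_itv /= leNgt tkx.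
  by move=> xt k _; rewrite /F /= in_itv /= (le_trans xt) // lerDl.
have F_nonincreasing : {homo F : k l / (k <= l)%N >-> (l <= k)%O}.
  move=> k l kl; apply/subsetPset => x /=; rewrite /F /= !in_itv /= => /le_trans; apply.
  by rewrite lerD2l lef_pV2 ?posrE ?ler_nat.
apply: fine_cvg; rewrite Phi_EFin -capF.
apply: nonincreasing_cvg_mu => //; last by rewrite capF; exact: measurable_itv.
exact: normal_prob_lty.
Qed.

Lemma Phi_cvgy : Phi k%:R @[k --> \oo] --> (1 : R).
Proof.
pose F k : set R := [set` `]-oo, k%:R]].
have cupF : \bigcup_k F k = setT.
  apply/seteqP; split => x //= _; exists (Num.bound `|x|) => //=.
  by rewrite /F /= in_itv /= ltW // (le_lt_trans (ler_norm x)) ?archi_boundP.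
have F_nondecreasing : {homo F : k l / (k <= l)%N >-> (k <= l)%O}.
  move=> k l kl; apply/subsetPset => x /=; rewrite /F /= !in_itv /= => /le_trans; apply.
  by rewrite ler_nat.
have NF_cvg : (N \o F) k @[k --> \oo] --> 1%:E.
  rewrite -(@probability_setT _ _ _ N) -cupF.
  by apply: nondecreasing_cvg_mu => // [k|]; [exact: measurable_itv | rewrite cupF].
exact: fine_cvg NF_cvg.
Qed.

Lemma exists_Phi_gt {q : R} : q < 1 -> exists t, q < Phi t.
Proof.
move=> q_lt1; have /(_ _)[k _ Hk] := cvgr_gt _ Phi_cvgy _ q_lt1.
by exists k%:R; apply: Hk => /=.
Qed.

Lemma Phi0 : Phi 0 = 2^-1 :> R.
Proof.
have twice_N_cy : (2%:E * N `[0%R, +oo[)%E = 1%E.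
  rewrite /normal_prob set_itvcy -ge0_symfun_integralT.
  - exact: integral_normal_pdf.
  - exact: normal_pdf_ge0.
  - exact: continuous_normal_pdf (oner_neq0 R).
  - by move=> x /=; rewrite /normal_pdf oner_eq0 /normal_fun !subr0 sqrrN.
have N_oy : N `]0%R, +oo[ = N `[0%R, +oo[.
  rewrite /normal_prob integral_itv_obnd_cbnd //.
  apply/measurable_EFinP/measurable_funTS; exact: measurable_normal_pdf.
have Phi0E : (Phi 0)%:E = (1 - N `[0%R, +oo[)%E.
  by rewrite Phi_EFin -setCitvr probability_setC //; congr (_ - _)%E; exact: N_oy.
have N_cy_fin : N `[0%R, +oo[ = (fine (N `[0%R, +oo[))%:E.
  by rewrite fineK // ge0_fin_numE ?measure_ge0 ?normal_prob_lty.
by move: twice_N_cy Phi0E; rewrite N_cy_fin -EFinM -EFinB => -[two_N] [->]; lra.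
Qed.

Lemma Phi_Phi_inv {q : R} : q < 1 -> q <= Phi (Phi_inv q).
Proof.
move=> q_lt1; apply: (cvgr_to_ge (Phi_cvg_right (Phi_inv q))); apply: nearW => k.
have [s q_le s_lt] : exists2 s, q <= Phi s & s < Phi_inv q + k.+1%:R^-1.
  apply: inf_lt; last by rewrite ltrDl.
  by have [t /ltW] := exists_Phi_gt q_lt1; exists t.
exact: le_trans q_le (Phi_nondecreasing _ _ (ltW s_lt)).
Qed.

Lemma Phi_inv_gt0 {q : R} : 2^-1 < q -> q < 1 -> 0 < Phi_inv q.
Proof.
move=> q_gt_half q_lt1.
have [t0 t0_gt0 Phi_t0_lt] : exists2 t0 : R, 0 < t0 & Phi t0 < q.
  have Phi0_lt : Phi 0 < q by rewrite Phi0.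
  have /(_ _)[k _ Hk] := cvgr_lt _ (Phi_cvg_right 0) _ Phi0_lt.
  by exists (0 + k.+1%:R^-1); [rewrite add0r | apply: Hk => /=].
apply: (lt_le_trans t0_gt0); apply: lb_le_inf.
  by have [t /ltW] := exists_Phi_gt q_lt1; exists t.
move=> s /= q_le; rewrite leNgt; apply/negP => s_lt.
by move: (le_trans q_le (Phi_nondecreasing _ _ (ltW s_lt))); rewrite leNgt Phi_t0_lt.
Qed.

End standard_normal_cdf.

Section normal_cdf_affine.
Context {R : realType}.

Lemma is_derive_affine (m s x : R) : is_derive x 1 (fun y : R => m + s * y) s.
Proof. by apply: is_derive_eq; rewrite add0r mul1r; exact: mulr1. Qed.

Lemma normal_pdf_affine (m s y : R) : 0 < s ->
  normal_pdf m s (m + s * y) * s = normal_pdf 0 1 y.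
Proof.
move=> s_gt0; have s_neq0 : s != 0 by rewrite gt_eqF.
rewrite /normal_pdf (negbTE s_neq0) oner_eq0 /normal_peak /normal_fun.
rewrite (addrC m) addrK subr0 expr1n mul1r.
have -> : - (s * y) ^+ 2 / (s ^+ 2 *+ 2) = - y ^+ 2 / (1 *+ 2).
  by field; rewrite ?s_neq0 ?pnatr_eq0.
rewrite -mulrnAr sqrtrM ?sqr_ge0 // sqrtr_sqr gtr0_norm // invfM.
by rewrite [LHS]mulrC !mulrA mulfV // mul1r.
Qed.

Lemma normal_prob_itvNy (m s c : R) : 0 < s ->
  normal_prob m s `]-oo, c] = (Phi ((c - m) / s))%:E.
Proof.
move=> s_gt0; pose F y := m + s * y.
have F'E : F^`()%classic = cst s.
  by apply/funext => x; rewrite derive1E; apply: derive_val; exact: is_derive_affine.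
have F_derivable x : derivable F x 1 := @ex_derive _ _ _ x 1 F s (is_derive_affine m s x).
have F_cont : continuous F.
  by move=> x; exact/differentiable_continuous/derivable1_diffP/F_derivable.
have F_Ny : F x @[x --> -oo] --> -oo.
  apply/cvgrNyPler => A _; exists ((A - m) / s); split; first exact: num_real.
  by move=> x /= /ltW; rewrite /F -lerBrDl -ler_pdivlMl // mulrC.
have FE : F ((c - m) / s) = c by rewrite /F mulrC divfK ?gt_eqF // addrC subrK.
have := @increasing_ge0_integration_by_substitutionNy R F (normal_pdf m s) ((c - m) / s).
rewrite FE F'E Phi_EFin /normal_prob => ->.
- by apply: eq_integral => y _; rewrite fctE /= normal_pdf_affine.
- by move=> x y _ _ xy; rewrite /F ltrD2l ltr_pM2l.
- by move=> x _; exact: cst_continuous.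
- exact: is_cvg_cst.
- exact: cvg_cst.
- by split; [move=> x _; exact: F_derivable | exact: cvg_at_left_filter (F_cont _)].
- exact: F_Ny.
- by apply: continuous_subspaceT; apply: continuous_normal_pdf; rewrite gt_eqF.
- by move=> x _; exact: normal_pdf_ge0.
Qed.

End normal_cdf_affine.

Section gaussian_halfline.
Context {R : realType}.

Lemma gauss_law_itvNy_ge (mean s b t q : R) : 0 <= s -> 0 < t -> q <= Phi t ->
  mean + t * s <= b -> (q%:E <= gauss_law mean (s ^+ 2) `]-oo, b])%E.
Proof.
move=> s_ge0 t_gt0 q_le margin; rewrite /gauss_law sqrf_eq0.
have [s0|s_neq0] := eqVneq s 0.
  rewrite indicE mem_set; first by rewrite lee_fin (le_trans q_le (Phi_le1 _)).
  by rewrite /= in_itv /=; move: margin; rewrite s0 mulr0 addr0.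
have s_gt0 : 0 < s by rewrite lt_neqAle eq_sym s_neq0.
rewrite sqrtr_sqr ger0_norm // normal_prob_itvNy // lee_fin.
by apply: (le_trans q_le); apply: Phi_nondecreasing; rewrite ler_pdivlMr //; lra.
Qed.

Lemma sqrtm_quad_form {N : nat} {M S : 'M[R]_N} (r : 'rV[R]_N) :
  is_sqrtm M S -> (r *m M *m r^T) 0 0 = norm2 (r *m S) ^+ 2.
Proof.
move=> [[S_sym _] <-].
rewrite [_ *m r^T](_ : _ = (r *m S) *m (r *m S)^T); last first.
  by rewrite trmx_mul S_sym !mulmxA.
rewrite /norm2 sqr_sqrtr; last by apply: sumr_ge0 => i _; exact: sqr_ge0.
by rewrite mxE; apply: eq_bigr => i _; rewrite expr2 [X in _ * X]mxE.
Qed.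

Context {d : measure_display} {T : measurableType d} {P : probability T R}.
Context {N : nat} {Z : T -> 'cV[R]_N} {mu : 'cV[R]_N} {M : 'M[R]_N}.
Hypothesis gaussZ : gaussian_vec P Z mu M.

Lemma gaussian_vec_measurable_le (r : 'rV[R]_N) (b : R) :
  measurable [set w | (r *m Z w) 0 0 <= b].
Proof.
have [rZ_mfun _] := gaussZ r^T; rewrite trmxK in rZ_mfun.
rewrite -preimage_itvNyc -[X in measurable X]setTI.
exact: rZ_mfun measurableT _ (measurable_itv _).
Qed.

Lemma gaussian_vec_prob_le {S : 'M[R]_N} (r : 'rV[R]_N) (b t q : R) :
  is_sqrtm M S -> 0 < t -> q <= Phi t ->
  (r *m mu) 0 0 + t * norm2 (r *m S) <= b ->
  (q%:E <= P [set w | ((r *m Z w) 0 0 <= b)%R])%E.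
Proof.
move=> sqrtS t_gt0 q_le margin.
have [_ lawZ] := gaussZ r^T; rewrite trmxK in lawZ.
rewrite -preimage_itvNyc lawZ; last exact: measurable_itv.
rewrite (sqrtm_quad_form r sqrtS).
exact: gauss_law_itvNy_ge (sqrtr_ge0 _) t_gt0 q_le margin.
Qed.

End gaussian_halfline.

Lemma mulmxDr_entry {R : pzRingType} {p : nat} (h : 'rV[R]_p) (X Y : 'cV[R]_p) :
  (h *m (X + Y)) 0 0 = (h *m X) 0 0 + (h *m Y) 0 0.
Proof. by rewrite mulmxDr !mxE. Qed.

Lemma next_state_constraint_le {R : realType} {n m : nat}
    (f : 'cV[R]_n -> 'cV[R]_n) (G : 'cV[R]_n -> 'M[R]_(n, m))
    (A : 'M[R]_n) (B : 'M[R]_(n, m)) (h : 'rV[R]_n)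
    (x w : 'cV[R]_n) (u eps : 'cV[R]_m) (c db : R) :
  `|(h *m err f G A B x (u + eps)) 0 0| <= db ->
  (h *m row_mx B 1%:M *m col_mx eps w) 0 0
    <= c - (h *m (A *m x + B *m u)) 0 0 - db ->
  (h *m (f x + G x *m (u + eps) + w)) 0 0 <= c.
Proof.
set e := err f G A B x (u + eps); set v := row_mx B 1%:M *m col_mx eps w.
move=> /(le_trans (ler_norm _)) err_le noise_le.
have -> : f x + G x *m (u + eps) + w = e + (A *m x + B *m u) + v.
  by rewrite /v mul_row_col mul1mx /e /err !mulmxDr; apply/matrixP => i k; rewrite !mxE; lra.
rewrite -mulmxA -/v in noise_le; clearbody e v.
by rewrite !mulmxDr_entry in noise_le *; lra.
Qed.

Theorem lemma1 (R : realType) (n m nc : nat) (Theta : Type)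
  (f : 'cV[R]_n -> 'cV[R]_n) (G : 'cV[R]_n -> 'M[R]_(n, m))
  (A : 'M[R]_n) (B : 'M[R]_(n, m)) (H : 'M[R]_(nc, n)) (d : 'cV[R]_nc)
  (mu_w : 'cV[R]_n) (Sigma_w : 'M[R]_n)
  (tau : nat) (dbar Dbar : 'I_nc -> R)
  (mu : 'cV[R]_n -> Theta -> 'cV[R]_m) (q : R)
  (dsp : measure_display) (Omega : measurableType dsp) (P : probability Omega R)
  (Z : Omega -> 'cV[R]_(m + n))
  (xk : 'cV[R]_n) (thetak : Theta) (Sigma_k : 'M[R]_m)
  (Sroot : 'M[R]_(m + n)) :
  1 / 2 < q < 1 ->
  psd Sigma_k -> psd Sigma_w ->
  (0 < tau)%N ->
  (forall j x u, `| (row j H *m err f G A B x u) 0 0 | <= dbar j) ->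
  (forall j x u,
     `| (row j H *m ((\sum_(i < tau) A ^+ i) *m err f G A B x u)) 0 0 | <= Dbar j) ->
  (* Z = [eps_k; w_k] jointly Gaussian, eps_k ~ N(0, Sigma_k), w_k ~ N(mu_w, Sigma_w),
     eps_k and w_k uncorrelated *)
  gaussian_vec P Z (col_mx 0 mu_w) (block_mx Sigma_k 0 0 Sigma_w) ->
  is_sqrtm (block_mx Sigma_k 0 0 Sigma_w) Sroot ->
  (forall (j : 'I_nc) (delta : R), delta = dbar j \/ delta = - dbar j ->
     norm2 (row j H *m row_mx B 1%:M *m Sroot)
       <= (Phi_inv q)^-1 *
          (d j 0 - (row j H *m (A *m xk + B *m mu xk thetak + mu_w)) 0 0 + delta)) ->
  forall j : 'I_nc,
    exists E : set Omega,
      [/\ measurable E,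
          E `<=` [set t | (row j H *m
                    (f xk + G xk *m (mu xk thetak + usubmx (Z t)) + dsubmx (Z t))) 0 0
                          <= d j 0]
        & (q%:E <= P E)%E].
Proof.
move=> /andP[q_gt_half q_lt1] _ _ _ err_bound _ gaussZ sqrtS margin j.
have t_gt0 : 0 < Phi_inv q by apply: Phi_inv_gt0 q_lt1; rewrite -div1r.
set h := row j H; set r := h *m row_mx B 1%:M; set u := mu xk thetak.
exists [set w | (r *m Z w) 0 0 <= d j 0 - (h *m (A *m xk + B *m u)) 0 0 - dbar j].
split.
- exact: gaussian_vec_measurable_le gaussZ _ _.
- move=> w /= rZw; apply: next_state_constraint_le (err_bound j _ _) _.
  by rewrite -(vsubmxK (Z w)) in rZw.
- apply: (gaussian_vec_prob_le gaussZ r _ _ _ sqrtS t_gt0 (Phi_Phi_inv q_lt1)).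
  have mean_eq : (r *m col_mx 0 mu_w) 0 0 = (h *m mu_w) 0 0.
    by rewrite -mulmxA mul_row_col mulmx0 add0r mul1mx.
  have := margin j (- dbar j) (or_intror erefl).
  move=> /(ler_wpM2l (ltW t_gt0)); rewrite mulrA mulfV ?gt_eqF // mul1r.
  by rewrite mean_eq !mulmxDr_entry; lra.
Qed.
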